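(* Let $\mathcal{H}=\mathcal{H}_h\oplus\mathcal{H}_h$ with basis $|l,m\rangle_\pm$, representation $\pi=\pi_+\oplus\pi_-$ of $\mathcal{A}(S^2_q)$, and let $D$ be the self-adjoint operator $D|l,m\rangle_\pm=(l+\frac12)|l,m\rangle_\mp$. Then for every $x\in\mathcal{A}(S^2_q)$ the commutator $[D,\pi(x)]$ is bounded.
   Context: $0<q\le1$ and $[x]:=\frac{q^x-q^{-x}}{q-q^{-1}}$. $\mathcal{A}(S^2_q)$ is the $*$-algebra generated by $a,a^*,b=b^*$ with $ba=q^2ab$, $a^*b=q^2ba^*$, $a^*a+b^2=1$, $q^2aa^*+q^{-2}b^2=q^2$. $\mathcal{H}_h=\bigoplus_{l=\frac12,\frac32,\dots}V_l$, $V_l$ with orthonormal basis $|l,m\rangle$, $m=-l,\dots,l$; $|l,m\rangle_\pm$ denote the basis vectors of the two copies in $\mathcal{H}$. The representations $\pi_\pm$ on $\mathcal{H}_h$ are given by $\pi_\pm(a)|l,m\rangle=\pm(1+q^2)\frac{q^{m-\frac12}}{[2l][2l+2]}\sqrt{[l+m+1][l-m]}|l,m+1\rangle+\frac{q^{m-l-\frac12}}{[2l+2]}\sqrt{[l+m+1][l+m+2]}|l+1,m+1\rangle-\frac{q^{m+l+\frac12}}{[2l]}\sqrt{[l-m][l-m-1]}|l-1,m\rangle$, $\pi_\pm(b)|l,m\rangle=\pm\frac{[l-m+1][l+m]-q^2[l-m][l+m+1]}{[2l][2l+2]}|l,m\rangle-\frac{q^{m+1}}{[2l+2]}\sqrt{[l-m+1][l+m+1]}|l+1,m\rangle-\frac{q^{m+1}}{[2l]}\sqrt{[l-m][l+m]}|l-1,m\rangle$,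 $\pi_\pm(a^* )=\pi_\pm(a)^*$ (vectors with $|m|>l$ or $l<\frac12$ are zero). *)

From mathcomp Require Import all_boot all_algebra.
From mathcomp Require Import complex.
From mathcomp Require Import reals exp.
Set Implicit Arguments. Unset Strict Implicit. Unset Printing Implicit Defensive.
Import GRing.Theory Num.Theory.
Local Open Scope ring_scope.
Local Open Scope complex_scope.

Section Podles.
Variables (R : realType) (q : R).

Definition qnum (x : R) : R :=
  if q == 1 then x else (q `^ x - q `^ (- x)) / (q - q^-1).

(* Basis index: sign s (true = '+', false = '-'), and integers j, t with
   l = j + 1/2, m = t + 1/2.  Valid iff l >= 1/2 and |m| <= l,
   i.e. 0 <= j and -j-1 <= t <= j. *)
Definition valid (j t : int) : bool := (0 <= j) && (- j - 1 <= t) && (t <= j).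

Definition vect := bool -> int -> int -> R[i].

(* reading a coordinate, with |l,m> = 0 for invalid (l,m) *)
Definition ev (v : vect) (s : bool) (j t : int) : R[i] :=
  if valid j t then v s j t else 0.

Definition lof (j : int) : R := j%:~R + 2^-1.
Definition mof (t : int) : R := t%:~R + 2^-1.
Definition sgn (s : bool) : R := if s then 1 else -1.

(* coefficients of pi_s(a)|l,m> *)
Definition ca1 s j t : R := let l := lof j in let m := mof t in
  sgn s * (1 + q ^+ 2) * q `^ (m - 2^-1) / (qnum (2 * l) * qnum (2 * l + 2))
  * Num.sqrt (qnum (l + m + 1) * qnum (l - m)).        (* -> |l, m+1> *)
Definition ca2 j t : R := let l := lof j in let m := mof t in
  q `^ (m - l - 2^-1) / qnum (2 * l + 2)
  * Num.sqrt (qnum (l + m + 1) * qnum (l + m + 2)).    (* -> |l+1, m+1> *)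
Definition ca3 j t : R := let l := lof j in let m := mof t in
  - (q `^ (m + l + 2^-1) / qnum (2 * l))
  * Num.sqrt (qnum (l - m) * qnum (l - m - 1)).        (* -> |l-1, m> *)

(* coefficients of pi_s(b)|l,m> *)
Definition cb0 s j t : R := let l := lof j in let m := mof t in
  sgn s * (qnum (l - m + 1) * qnum (l + m) - q ^+ 2 * qnum (l - m) * qnum (l + m + 1))
  / (qnum (2 * l) * qnum (2 * l + 2)).                 (* -> |l, m> *)
Definition cb1 j t : R := let l := lof j in let m := mof t in
  - (q `^ (m + 1) / qnum (2 * l + 2))
  * Num.sqrt (qnum (l - m + 1) * qnum (l + m + 1)).    (* -> |l+1, m> *)
Definition cb2 j t : R := let l := lof j in let m := mof t in
  - (q `^ (m + 1) / qnum (2 * l))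
  * Num.sqrt (qnum (l - m) * qnum (l + m)).            (* -> |l-1, m> *)

(* pi(a) = pi_+(a) (+) pi_-(a), written row-wise:
   (pi(a) v)(l',m') = sum over (l,m) of <l',m'|pi(a)|l,m> v(l,m). *)
Definition pi_a (v : vect) : vect := fun s j t =>
  if valid j t then
    (ca1 s j (t - 1))%:C * ev v s j (t - 1)
  + (ca2 (j - 1) (t - 1))%:C * ev v s (j - 1) (t - 1)
  + (ca3 (j + 1) t)%:C * ev v s (j + 1) t
  else 0.

(* pi(a^* ) = pi(a)^* : the (conjugate) transpose; all entries are real. *)
Definition pi_astar (v : vect) : vect := fun s j t =>
  if valid j t then
    (ca1 s j t)%:C * ev v s j (t + 1)
  + (ca2 j t)%:C * ev v s (j + 1) (t + 1)
  + (ca3 j t)%:C * ev v s (j - 1) t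
  else 0.

Definition pi_b (v : vect) : vect := fun s j t =>
  if valid j t then
    (cb0 s j t)%:C * ev v s j t
  + (cb1 (j - 1) t)%:C * ev v s (j - 1) t
  + (cb2 (j + 1) t)%:C * ev v s (j + 1) t
  else 0.

Definition Dop (v : vect) : vect := fun s j t =>
  if valid j t then (lof j + 2^-1)%:C * ev v (~~ s) j t else 0.

(* Elements of A(S^2_q): every element is a noncommutative polynomial with
   complex coefficients in the generators a, a^*, b; we range over such
   polynomial expressions (representatives). *)
Inductive poly_term : Type :=
| Ta | Tastar | Tb
| Tscal of R[i]
| Tadd of poly_term & poly_term
| Tmul of poly_term & poly_term.

Fixpoint piS (x : poly_term) (v : vect) : vect :=
  match x with
  | Ta => pi_a v
  | Tastar => pi_astar v
  | Tb => pi_b v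
  | Tscal c => fun s j t => if valid j t then c * v s j t else 0
  | Tadd x1 x2 => fun s j t => piS x1 v s j t + piS x2 v s j t
  | Tmul x1 x2 => piS x1 (piS x2 v)
  end.

Definition commutator (A B : vect -> vect) (v : vect) : vect :=
  fun s j t => A (B v) s j t - B (A v) s j t.

Definition abs2 (z : R[i]) : R := let: a +i* b := z in a ^+ 2 + b ^+ 2.

(* squared norm of the components with l < M + 1/2 *)
Definition nsq (M : nat) (v : vect) : R :=
  \sum_(s : bool) \sum_(j < M)
     \sum_(k < (2 * j + 2)%N) abs2 (v s j%:Z (k%:Z - j%:Z - 1)).

Definition fin_supp (N : nat) (v : vect) : Prop :=
  forall s (j t : int), (N%:Z <= j) -> v s j t = 0.

(* T is bounded on the dense domain of finitely supported vectors
   (the algebraic span of the |l,m>_{+-}, a core for D). *)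
Definition bounded_op (T : vect -> vect) : Prop :=
  exists C : R, forall (N : nat) (v : vect), fin_supp N v ->
    forall M : nat, nsq M (T v) <= C * nsq N v.

End Podles.

(* D multiplies |l,m> by l + 1/2 and swaps the two copies of H_h, while pi(a), pi(a^* ) and
   pi(b) only connect |l,m> with |l',m'> for |l - l'| <= 1 and |m - m'| <= 1.  Hence pi of a
   generator, and its commutator with D, is a sum of three weighted shifts.  In the commutator
   the weights that move l become +-1 times those of pi, and the weight that keeps l fixed
   becomes 2(l + 1/2) times it, because pi_+ and pi_- differ there only by a sign.
   Estimates on q-numbers show that all weights of pi are bounded and the l-preserving ones are
   O(1/l), so all these shifts are bounded.  Boundedness together with a bounded propagation in l
   survives sums, products and the Leibniz rule [D, xy] = [D, x] y + x [D, y], which reaches every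
   polynomial in the generators. *)

From mathcomp Require Import all_boot all_order all_algebra.
From mathcomp Require Import complex.
From mathcomp Require Import boolp reals exp.
From mathcomp Require Import ring lra zify.
Import Order.TTheory GRing.Theory Num.Theory.
Set Implicit Arguments. Unset Strict Implicit. Unset Printing Implicit Defensive.
Local Open Scope ring_scope.

(** * Banded operators *)

Definition index_seq (M : nat) : seq (int * int) :=
  [seq (j%:Z, k%:Z - j%:Z - 1) | j <- iota 0 M, k <- iota 0 (2 * j + 2)].

Lemma index_seq_uniq M : uniq (index_seq M).
Proof.
apply: allpairs_uniq_dep => [|j _|]; rewrite ?iota_uniq //.
move=> [j k] [j' k'] _ _ /= [ejj' ekk'].
have ej : j = j' by lia.
by subst j'; have -> : k = k' by lia.
Qed.

Lemma mem_index_seq N (j t : int) : valid j t -> j < N%:Z -> (j, t) \in index_seq N.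
Proof.
case/andP => /andP [j_ge0 t_ge t_le] jN.
apply/allpairsPdep; exists (absz j), (absz (t + j + 1)).
by rewrite !mem_iota; split; [lia | lia | congr (_, _); lia].
Qed.

Section BandedOperators.
Variable R : realType.
Local Open Scope complex_scope.
Implicit Types (z w : R[i]) (u v : vect R) (T : vect R -> vect R).

Lemma vect_ext u v : (forall s j t, u s j t = v s j t) -> u = v.
Proof. by move=> e; apply/funext => s; apply/funext => j; apply/funext => t. Qed.

Lemma abs2_ge0 z : 0 <= abs2 z.
Proof. by case: z => x y /=; nra. Qed.

Lemma abs2_0 : abs2 (0 : R[i]) = 0.
Proof. by rewrite /abs2 /=; ring. Qed.

Lemma abs2M z w : abs2 (z * w) = abs2 z * abs2 w.
Proof. by case: z => a b; case: w => x y /=; ring. Qed.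

Lemma abs2_real (a : R) : abs2 a%:C = a ^+ 2.
Proof. by rewrite /abs2 /=; ring. Qed.

Lemma abs2D_le z w : abs2 (z + w) <= 2 * abs2 z + 2 * abs2 w.
Proof.
case: z => x y; case: w => a b /=.
by have := sqr_ge0 (x - a); have := sqr_ge0 (y - b); nra.
Qed.

Lemma nsqE M v : nsq M v = \sum_(s : bool) \sum_(p <- index_seq M) abs2 (v s p.1 p.2).
Proof.
have iota0 n : iota 0 n = index_iota 0 n by rewrite /index_iota subn0.
apply: eq_bigr => s _; rewrite big_allpairs_dep /= iota0 big_mkord.
by apply: eq_bigr => j _; rewrite iota0 big_mkord.
Qed.

Lemma nsq_ge0 M v : 0 <= nsq M v.
Proof. by do 3![apply: sumr_ge0 => ? _]; exact: abs2_ge0. Qed.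

Lemma sum_comp_inj_le (T : eqType) (r1 r2 : seq T) (f : T -> T) (g : T -> R) :
  uniq r1 -> uniq r2 -> injective f -> (forall y, 0 <= g y) ->
  (forall y, y \notin r2 -> g y = 0) ->
  \sum_(x <- r1) g (f x) <= \sum_(y <- r2) g y.
Proof.
move=> r1_uniq r2_uniq f_inj g_ge0 g_out.
rewrite -(big_map f xpredT g) (bigID (mem r2)) /= [X in _ + X]big1; last by move=> y /g_out.
rewrite addr0 -big_filter; set s := filter _ _.
have s_uniq : uniq s by apply: filter_uniq; rewrite map_inj_uniq.
rewrite [X in _ <= X](bigID (mem s)) /= -[X in X + _ ]big_filter.
have -> : \sum_(y <- [seq y <- r2 | y \in s]) g y = \sum_(y <- s) g y.
  apply/perm_big/uniq_perm => [||y]; [exact: filter_uniq | exact: s_uniq |].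
  by rewrite mem_filter andb_idr // /s mem_filter => /andP [].
by rewrite lerDl; apply: sumr_ge0 => y _; exact: g_ge0.
Qed.

(* The support clause makes [banded] stable under composition, which
   [bounded_op] alone is not: its bound only applies to finitely supported inputs. *)
Definition banded T := exists (k : nat) (C : R), 0 <= C /\
  forall N v, fin_supp N v -> fin_supp (N + k) (T v) /\ forall M, nsq M (T v) <= C * nsq N v.

Lemma banded_bounded_op T : banded T -> bounded_op T.
Proof. by case=> k [C [_ HT]]; exists C => N v /HT []. Qed.

Lemma banded_eq T1 T2 : banded T1 -> T1 =1 T2 -> banded T2.
Proof. by move=> + /funext <-. Qed.

Definition vadd u v : vect R := fun s j t => u s j t + v s j t.

Lemma nsq_vadd_le M u v : nsq M (vadd u v) <= 2 * nsq M u + 2 * nsq M v.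
Proof.
rewrite /nsq !mulr_sumr -big_split; apply: ler_sum => s _.
rewrite !mulr_sumr -big_split; apply: ler_sum => j _.
rewrite !mulr_sumr -big_split; apply: ler_sum => k _; exact: abs2D_le.
Qed.

Lemma banded_add T1 T2 : banded T1 -> banded T2 -> banded (fun v => vadd (T1 v) (T2 v)).
Proof.
case=> k1 [C1 [C1_ge0 H1]] [k2 [C2 [C2_ge0 H2]]].
exists (k1 + k2)%N, (2 * C1 + 2 * C2); split=> [|N v v_supp]; first lra.
have [supp1 le1] := H1 N v v_supp; have [supp2 le2] := H2 N v v_supp; split.
  by move=> s j t jN; rewrite /vadd supp1 ?supp2 ?addr0 //; apply: le_trans jN; lia.
move=> M; apply: le_trans (nsq_vadd_le _ _ _) _.
by have := le1 M; have := le2 M; have := nsq_ge0 N v; lra.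
Qed.

Lemma banded_comp T1 T2 : banded T1 -> banded T2 -> banded (fun v => T1 (T2 v)).
Proof.
case=> k1 [C1 [C1_ge0 H1]] [k2 [C2 [C2_ge0 H2]]].
exists (k2 + k1)%N, (C1 * C2); split=> [|N v v_supp]; first exact: mulr_ge0.
have [supp2 le2] := H2 N v v_supp; have [supp1 le1] := H1 _ _ supp2.
split=> [|M]; first by rewrite addnA.
by apply: le_trans (le1 M) _; rewrite -mulrA; apply: ler_wpM2l.
Qed.

Lemma banded_scale (c : R[i]) T : banded T -> banded (fun v s j t => c * T v s j t).
Proof.
case=> k [C [C_ge0 HT]]; exists k, (abs2 c * C); split=> [|N v v_supp].
  exact: mulr_ge0 (abs2_ge0 c) C_ge0.
have [supp le] := HT N v v_supp; split=> [s j t jN|M]; first by rewrite supp ?mulr0.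
have -> : nsq M (fun s j t => c * T v s j t) = abs2 c * nsq M (T v).
  by rewrite /nsq; do 3![rewrite mulr_sumr; apply: eq_bigr => ? _]; exact: abs2M.
by rewrite -mulrA; apply: ler_wpM2l; rewrite ?abs2_ge0.
Qed.

Definition wshift (sg : bool -> bool) (c : bool -> int -> int -> R) (a b : int) v : vect R :=
  fun s j t => if valid j t then (c s j t)%:C * ev v (sg s) (j + a) (t + b) else 0.

Section WeightedShift.
Variables (sg : bool -> bool) (c : bool -> int -> int -> R) (a b : int) (K : R).
Hypotheses (sg_inj : injective sg) (a_ge : -1 <= a) (K_ge0 : 0 <= K).
Hypothesis c_le : forall s j t, valid j t -> valid (j + a) (t + b) -> c s j t ^+ 2 <= K.

Lemma fin_supp_wshift N v : fin_supp N v -> fin_supp (N + 1) (wshift sg c a b v).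
Proof.
move=> v_supp s j t jN; rewrite /wshift /ev; case: (valid j t) => //.
by case: (valid _ _); rewrite ?v_supp ?mulr0 //; lia.
Qed.

Lemma nsq_wshift_le N v M : fin_supp N v -> nsq M (wshift sg c a b v) <= K * nsq N v.
Proof.
move=> v_supp; rewrite !nsqE mulr_sumr [X in _ <= X](reindex_inj sg_inj) /=.
apply: ler_sum => s _.
pose g p := if p \in index_seq N then abs2 (v (sg s) p.1 p.2) else 0.
have g_ge0 p : 0 <= g p by rewrite /g; case: ifP => _; rewrite ?abs2_ge0.
have shift_le p : abs2 (wshift sg c a b v s p.1 p.2) <= K * g (p.1 + a, p.2 + b).
  rewrite /wshift /ev; case: ifP => [vp0|_]; last by rewrite abs2_0 mulr_ge0.
  case: ifP => vp; last by rewrite mulr0 abs2_0 mulr_ge0.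
  rewrite abs2M abs2_real /g; case: ifP => [_|/negbT pN].
    by apply: ler_wpM2r; rewrite ?abs2_ge0 ?c_le.
  case: (ltP (p.1 + a) N%:Z) => [/(mem_index_seq vp)|jN]; first by rewrite (negbTE pN).
  by rewrite v_supp // abs2_0 !mulr0.
apply: le_trans (ler_sum _ (fun p _ => shift_le p)) _; rewrite -big_distrr /=; apply: ler_wpM2l => //.
apply: le_trans (sum_comp_inj_le (index_seq_uniq M) (index_seq_uniq N) _ g_ge0 _) _.
- by move=> [x y] [x' y'] /= [/addIr -> /addIr ->].
- by move=> p; rewrite /g => /negbTE ->.
by rewrite /g big_seq_cond [X in _ <= X]big_seq_cond; apply: ler_sum => p /andP [->].
Qed.

Lemma banded_wshift : banded (wshift sg c a b).
Proof.
exists 1%N, K; split=> // N v v_supp.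
by split=> [|M]; [exact: fin_supp_wshift | exact: nsq_wshift_le].
Qed.

End WeightedShift.
Definition vsub u v : vect R := fun s j t => u s j t - v s j t.

Section Commutators.
Variables D A B : vect R -> vect R.

Lemma commutator_add v : (forall u1 u2, D (vadd u1 u2) = vadd (D u1) (D u2)) ->
  commutator D (fun u => vadd (A u) (B u)) v = vadd (commutator D A v) (commutator D B v).
Proof. by move=> D_add; rewrite /commutator D_add; apply: vect_ext => s j t; rewrite /vadd; ring. Qed.

Lemma commutator_comp v : (forall u1 u2, A (vsub u1 u2) = vsub (A u1) (A u2)) ->
  commutator D (fun u => A (B u)) v = vadd (commutator D A (B v)) (A (commutator D B v)).
Proof.
move=> A_sub; have -> : commutator D B v = vsub (D (B v)) (B (D v)) by [].
by rewrite A_sub; apply: vect_ext => s j t; rewrite /commutator /vadd /vsub; ring.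
Qed.

End Commutators.

End BandedOperators.

Section Coordinates.
Variable R : realType.

Lemma valid_ge0 j t : valid j t -> 0 <= j.
Proof. by case/andP => /andP []. Qed.

Lemma valid_bounds j t : valid j t ->
  [/\ 2^-1 <= lof R j, - lof R j <= mof R t & mof R t <= lof R j].
Proof.
case/andP => /andP [j_ge0 t_ge t_le]; rewrite /lof /mof.
have : (0 : R) <= j%:~R by rewrite ler0z.
have : ((- j - 1)%:~R : R) <= t%:~R by rewrite ler_int.
have : (t%:~R : R) <= j%:~R by rewrite ler_int.
by rewrite intrB intrN; split; lra.
Qed.

Lemma lofB1 j : lof R (j - 1) = lof R j - 1.
Proof. by rewrite /lof; ring. Qed.

Lemma mofD1 t : mof R (t + 1) = mof R t + 1.
Proof. by rewrite /mof; ring. Qed.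

Lemma lof_twice j : 0 <= j -> 2 * lof R j = (2 * `|j| + 1)%N%:R.
Proof.
move=> j_ge0; rewrite /lof natrD natrM.
have -> : (j%:~R : R) = `|j|%:R by rewrite -[j in LHS]gez0_abs.
by field.
Qed.

Lemma sgn_sqr s : sgn R s ^+ 2 = 1.
Proof. by case: s; rewrite /sgn ?sqrrN expr1n. Qed.

End Coordinates.

Section SquareBounds.
Variable F : realFieldType.

Lemma sqr_div_le1 (A B : F) : 0 < B -> A ^+ 2 <= B ^+ 2 -> (A / B) ^+ 2 <= 1.
Proof. by move=> B_gt0 AB; rewrite expr_div_n ler_pdivrMr ?mul1r // exprn_gt0. Qed.

Lemma sqr_scale_le (x m c a : F) : 0 <= x -> x <= a * m -> m ^+ 2 * c ^+ 2 <= 1 ->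
  (x * c) ^+ 2 <= a ^+ 2.
Proof.
move=> x_ge0 x_le mc_le; rewrite exprMn.
have : x ^+ 2 <= (a * m) ^+ 2 by rewrite ler_sqr ?nnegrE //; apply: le_trans x_le.
move/(ler_wpM2r (sqr_ge0 c))/le_trans; apply.
by rewrite exprMn -mulrA ler_piMr ?sqr_ge0.
Qed.

End SquareBounds.

Lemma sqr_div_sqrt_le1 (F : rcfType) (A B S : F) : 0 < B -> 0 <= S -> A ^+ 2 * S <= B ^+ 2 ->
  (A / B * Num.sqrt S) ^+ 2 <= 1.
Proof. by move=> B_gt0 S_ge0 ASB; rewrite mulrAC sqr_div_le1 // exprMn sqr_sqrtr. Qed.

(** * Estimates on q-numbers *)

Section PodlesSphere.
Variables (R : realType) (q : R).
Hypotheses (q_gt0 : 0 < q) (q_le1 : q <= 1).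
Local Notation Q := (qnum q).
Implicit Types x y : R.

Lemma qpowD x y : q `^ (x + y) = q `^ x * q `^ y.
Proof. by apply: powRD; rewrite lt0r_neq0 ?implybT. Qed.

Lemma qpow1 : q `^ 1 = q.
Proof. exact/powRr1/ltW. Qed.

Lemma qpow_ge0 x : 0 <= q `^ x.
Proof. exact/ltW/powR_gt0. Qed.

Lemma qpowNK x : q `^ x * q `^ (- x) = 1.
Proof. by rewrite -qpowD subrr powRr0. Qed.

Lemma qpow_le x y : x <= y -> q `^ y <= q `^ x.
Proof. by apply: ger_powR; rewrite q_gt0. Qed.

Lemma qpow_le1 x : 0 <= x -> q `^ x <= 1.
Proof. by move/qpow_le; rewrite powRr0. Qed.

Lemma qpow_sqr x : (q `^ x) ^+ 2 = q `^ (2 * x).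
Proof. by rewrite expr2 -qpowD mulr2n mulrDl mul1r. Qed.

Lemma qpowN_add_ge2 x : 2 <= q `^ x + q `^ (- x).
Proof.
have := qpowNK x; have := qpow_ge0 x; have := qpow_ge0 (- x).
by move: (q `^ x) (q `^ (- x)) => a b; have := sqr_ge0 (a - b); nra.
Qed.

Lemma q_lt1_or_eq1 : q < 1 \/ q = 1.
Proof. by case: (ltrP q 1) => [|q_ge1]; [left | right; apply/eqP; rewrite eq_le q_le1]. Qed.

Lemma qnum_q1 x : q = 1 -> Q x = x.
Proof. by move=> q1; rewrite /qnum q1 eqxx. Qed.

Lemma qpow_q1 x : q = 1 -> q `^ x = 1.
Proof. by move->; rewrite powR1. Qed.

Lemma qnum_qlt1 x : q < 1 -> Q x = (q `^ x - q `^ (- x)) / (q - q^-1).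
Proof. by move=> q_lt1; rewrite /qnum lt_eqF. Qed.

Lemma qsub_inv_lt0 : q < 1 -> q - q^-1 < 0.
Proof.
move=> q_lt1; have : 1 < q^-1 by rewrite invf_gt1.
lra.
Qed.

Lemma qnum_field_cond : q < 1 -> (q != 0) && (q * q - 1 != 0).
Proof.
move=> q_lt1; rewrite lt0r_neq0 // lt_eqF //.
have : 0 < q * (1 - q) by rewrite mulr_gt0 // subr_gt0.
nra.
Qed.

Lemma qnum0 : Q 0 = 0.
Proof.
by case: q_lt1_or_eq1 => [q_lt1|/qnum_q1 ->//]; rewrite qnum_qlt1 // oppr0 subrr mul0r.
Qed.

Lemma qnum1 : Q 1 = 1.
Proof.
case: q_lt1_or_eq1 => [q_lt1|/qnum_q1 ->//].
by rewrite qnum_qlt1 // powRN qpow1 divff // lt_eqF // qsub_inv_lt0.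
Qed.

Lemma qnumD1 x : Q (x + 1) = q * Q x + q `^ (- x).
Proof.
case: q_lt1_or_eq1 => [q_lt1|q1]; last by rewrite !qnum_q1 // qpow_q1 // q1; ring.
rewrite !qnum_qlt1 // opprD !qpowD (powRN q 1) qpow1.
by field; exact: qnum_field_cond.
Qed.

Lemma qnumD1V x : Q (x + 1) = q^-1 * Q x + q `^ x.
Proof.
case: q_lt1_or_eq1 => [q_lt1|q1]; last by rewrite !qnum_q1 // qpow_q1 // q1 invr1; ring.
rewrite !qnum_qlt1 // opprD !qpowD (powRN q 1) qpow1.
by field; exact: qnum_field_cond.
Qed.

Lemma qnumD2 x : Q (x + 2) = Q x + q `^ (x + 1) + q `^ (- (x + 1)).
Proof.
have -> : x + 2 = x + 1 + 1 by ring.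
rewrite qnumD1 qnumD1V qpowD qpow1.
by rewrite mulrDr mulrA mulfV ?mul1r ?gt_eqF //; ring.
Qed.

Lemma qnum_nat_ge (n : nat) : n%:R <= Q n%:R.
Proof.
suff: n%:R <= Q n%:R /\ n.+1%:R <= Q n.+1%:R by case.
elim: n => [|n [IHn IHn1]]; first by rewrite qnum0 qnum1.
split=> //; rewrite -[n.+2]addn2 natrD qnumD2.
by have := qpowN_add_ge2 (n%:R + 1); lra.
Qed.

(* For q < 1, q^x [x] = (q^(2x) - 1) / (q - q^-1) and q - q^-1 < 0. *)
Lemma qpow_qnum_le x y : x <= y -> q `^ x * Q x <= q `^ y * Q y.
Proof.
move=> xy; case: q_lt1_or_eq1 => [q_lt1|q1]; last by rewrite !qnum_q1 ?qpow_q1 ?mul1r.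
have qpow_qnumE z : q `^ z * Q z = ((q `^ z) ^+ 2 - 1) / (q - q^-1).
  by rewrite qnum_qlt1 // mulrA mulrBr -expr2 qpowNK.
rewrite !qpow_qnumE ler_nM2r ?invr_lt0 ?qsub_inv_lt0 // lerD2r.
by rewrite ler_sqr ?nnegrE ?qpow_ge0 ?qpow_le.
Qed.

Lemma qpowB_qnum_le x y : x <= y -> q `^ (x - y) * Q x <= Q y.
Proof.
move=> xy; rewrite qpowD mulrAC mulrC.
apply: le_trans (ler_wpM2l (qpow_ge0 _) (qpow_qnum_le xy)) _.
by rewrite mulrA [q `^ (- y) * _]mulrC qpowNK mul1r.
Qed.

Lemma qnum_ge0 x : 0 <= x -> 0 <= Q x.
Proof.
move=> x_ge0; have := qpow_qnum_le x_ge0.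
by rewrite qnum0 mulr0 pmulr_rge0 // powR_gt0.
Qed.

Lemma qnum_le x y : 0 <= x -> x <= y -> Q x <= Q y.
Proof.
move=> x_ge0 xy; apply: le_trans (qpowB_qnum_le xy).
by rewrite ler_peMl ?qnum_ge0 // -(powRr0 q) qpow_le // subr_le0.
Qed.

Lemma qnum_ge1 x : 1 <= x -> 1 <= Q x.
Proof. by move=> x_ge1; rewrite -qnum1 qnum_le. Qed.

Lemma qnum_mul_le x y z n : 0 <= x -> 0 <= y -> x <= n -> y <= n -> x + y - 2 * n <= z ->
  q `^ z * (Q x * Q y) <= Q n ^+ 2.
Proof.
move=> x_ge0 y_ge0 xn yn xyz.
have {}xyz : (x - n) + (y - n) <= z by lra.
rewrite expr2; apply: le_trans (ler_pM _ _ (qpowB_qnum_le xn) (qpowB_qnum_le yn)).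
- by rewrite mulrACA -qpowD ler_wpM2r ?mulr_ge0 ?qnum_ge0 ?qpow_le.
- by rewrite mulr_ge0 ?qpow_ge0 ?qnum_ge0.
- by rewrite mulr_ge0 ?qpow_ge0 ?qnum_ge0.
Qed.

(** * Matrix coefficients of the representation *)

Lemma lof_twice_le_qnum j : 0 <= j ->
  2 * lof R j <= Q (2 * lof R j) /\ 2 * lof R j + 2 <= Q (2 * lof R j + 2).
Proof.
move=> /lof_twice ->; have -> : (2 * `|j| + 1)%N%:R + 2 = (2 * `|j| + 3)%N%:R :> R.
  by rewrite !natrD; ring.
by split; apply: qnum_nat_ge.
Qed.

Lemma qnum_cross_diff a b :
  Q (b + 1) * Q a - q ^+ 2 * Q b * Q (a + 1) = q `^ (- b) * Q a - q `^ (a + 2) * Q b.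
Proof.
rewrite (qnumD1 b) (qnumD1V a) qpowD powR_mulrn ?ltW //.
by field; rewrite lt0r_neq0.
Qed.

Lemma qsqrt_coef_sqr_le1 w x y n : 1 <= n -> 0 <= x -> 0 <= y -> x <= n -> y <= n ->
  x + y - 2 * n <= 2 * w -> (q `^ w / Q n * Num.sqrt (Q x * Q y)) ^+ 2 <= 1.
Proof.
move=> n_ge1 x_ge0 y_ge0 xn yn xyw; apply: sqr_div_sqrt_le1.
- by apply: lt_le_trans (qnum_ge1 n_ge1).
- by rewrite mulr_ge0 ?qnum_ge0.
- by rewrite qpow_sqr qnum_mul_le.
Qed.

Lemma ca2_sqr_le j t : valid j t -> ca2 q j t ^+ 2 <= 1.
Proof. by case/(valid_bounds R) => *; apply: qsqrt_coef_sqr_le1; lra. Qed.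

Lemma ca3_sqr_le j t : valid j t -> valid (j - 1) t -> ca3 q j t ^+ 2 <= 1.
Proof.
move=> /(valid_bounds R) [l_ge m_ge m_le] /(valid_bounds R) [_ _]; rewrite lofB1 => m_le'.
by rewrite /ca3 mulNr sqrrN; apply: qsqrt_coef_sqr_le1; lra.
Qed.

Lemma cb1_sqr_le j t : valid j t -> cb1 q j t ^+ 2 <= 1.
Proof.
by case/(valid_bounds R) => *; rewrite /cb1 mulNr sqrrN; apply: qsqrt_coef_sqr_le1; lra.
Qed.

Lemma cb2_sqr_le j t : valid j t -> cb2 q j t ^+ 2 <= 1.
Proof.
by case/(valid_bounds R) => *; rewrite /cb2 mulNr sqrrN; apply: qsqrt_coef_sqr_le1; lra.
Qed.

Lemma ca1_sqr_le s j t : valid j t -> valid j (t + 1) -> lof R j ^+ 2 * ca1 q s j t ^+ 2 <= 1.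
Proof.
move=> vjt /(valid_bounds R) [_ _]; rewrite mofD1 => m1_le.
have [l_ge m_ge m_le] := valid_bounds R vjt.
have [l2_le l22_le] := lof_twice_le_qnum (valid_ge0 vjt).
rewrite /ca1 -exprMn !mulrA.
apply: sqr_div_sqrt_le1; [by rewrite mulr_gt0 //; lra | by rewrite mulr_ge0 ?qnum_ge0 //; lra|].
have q2_le1 : q ^+ 2 <= 1 by rewrite expr_le1 // ltW.
have sum_le : (1 + q ^+ 2) ^+ 2 <= 4 by have := sqr_ge0 q; nra.
have prod_le : q `^ (2 * (mof R t - 2^-1)) *
    (Q (lof R j + mof R t + 1) * Q (lof R j - mof R t)) <= Q (2 * lof R j + 2) ^+ 2.
  by apply: qnum_mul_le; lra.
rewrite !exprMn sgn_sqr mulr1 qpow_sqr -[X in X <= _]mulrA; apply: ler_pM => //.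
- by rewrite mulr_ge0 ?sqr_ge0.
- by rewrite mulr_ge0 ?qpow_ge0 // mulr_ge0 // qnum_ge0 //; lra.
- by have := sqr_ge0 (1 + q ^+ 2); nra.
Qed.

Lemma cb0_sqr_le s j t : valid j t -> (lof R j + 1) ^+ 2 * cb0 q s j t ^+ 2 <= 1.
Proof.
move=> vjt; have [l_ge m_ge m_le] := valid_bounds R vjt.
have [l2_le l22_le] := lof_twice_le_qnum (valid_ge0 vjt).
rewrite /cb0 qnum_cross_diff -exprMn !mulrA.
set X := q `^ _ * Q _; set Y := q `^ _ * Q _.
have X_le : X <= Q (2 * lof R j).
  rewrite /X (_ : - _ = lof R j + mof R t - 2 * lof R j); last by ring.
  by apply: qpowB_qnum_le; lra.
have Y_le : Y <= Q (2 * lof R j).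
  apply: le_trans (qnum_le (x := lof R j - mof R t) _ _); try lra.
  by rewrite ler_piMl ?qnum_ge0 ?qpow_le1 //; lra.
have X_ge0 : 0 <= X by rewrite mulr_ge0 ?qpow_ge0 ?qnum_ge0 //; lra.
have Y_ge0 : 0 <= Y by rewrite mulr_ge0 ?qpow_ge0 ?qnum_ge0 //; lra.
apply: sqr_div_le1; first by rewrite mulr_gt0 //; lra.
rewrite !exprMn sgn_sqr mulr1 [X in _ <= X]mulrC; apply: ler_pM; rewrite ?sqr_ge0 //.
- by rewrite ler_sqr ?nnegrE; lra.
- by nra.
Qed.

(** * Decomposition into weighted shifts *)

Local Open Scope complex_scope.
Implicit Types (u v : vect R).

Lemma ca1_negb s j t : ca1 q (~~ s) j t = - ca1 q s j t.
Proof. by rewrite /ca1 /sgn; case: s => /=; ring. Qed.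

Lemma cb0_negb s j t : cb0 q (~~ s) j t = - cb0 q s j t.
Proof. by rewrite /cb0 /sgn; case: s => /=; ring. Qed.

Lemma ev_valid v s j t : valid j t -> ev v s j t = v s j t.
Proof. by rewrite /ev => ->. Qed.

Lemma ev_Dop v s j t : ev (Dop v) s j t = (lof R j + 2^-1)%:C * ev v (~~ s) j t.
Proof. by rewrite /Dop /ev; case: (valid j t); rewrite ?mulr0. Qed.

Lemma Dop_vadd u v : Dop (vadd u v) = vadd (Dop u) (Dop v).
Proof. by apply: vect_ext => s j t; rewrite /Dop /vadd /ev; case: (valid j t); ring. Qed.

Lemma ev_vsub u v s j t : ev (vsub u v) s j t = ev u s j t - ev v s j t.
Proof. by rewrite /ev; case: (valid j t); rewrite ?subr0. Qed.

Lemma piS_vsub (x : poly_term R) u v : piS q x (vsub u v) = vsub (piS q x u) (piS q x v).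
Proof.
elim: x u v => [|||c|x1 IH1 x2 IH2|x1 IH1 x2 IH2] u v /=; last by rewrite IH2 IH1.
all: apply: vect_ext => s j t.
- by rewrite /pi_a !ev_vsub /vsub; case: (valid j t); ring.
- by rewrite /pi_astar !ev_vsub /vsub; case: (valid j t); ring.
- by rewrite /pi_b !ev_vsub /vsub; case: (valid j t); ring.
- by rewrite /vsub; case: (valid j t); ring.
- by rewrite IH1 IH2 /vsub; ring.
Qed.

Lemma pi_aE : pi_a q = fun v => vadd (vadd
   (wshift id (fun s j t => ca1 q s j (t - 1)) 0 (-1) v)
   (wshift id (fun _ j t => ca2 q (j - 1) (t - 1)) (-1) (-1) v))
   (wshift id (fun _ j t => ca3 q (j + 1) t) 1 0 v).
Proof.
apply/funext => v; apply: vect_ext => s j t.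
by rewrite /pi_a /vadd /wshift !addr0; case: (valid j t); rewrite ?addr0.
Qed.

Lemma pi_astarE : pi_astar q = fun v => vadd (vadd
   (wshift id (fun s j t => ca1 q s j t) 0 1 v)
   (wshift id (fun _ j t => ca2 q j t) 1 1 v))
   (wshift id (fun _ j t => ca3 q j t) (-1) 0 v).
Proof.
apply/funext => v; apply: vect_ext => s j t.
by rewrite /pi_astar /vadd /wshift !addr0; case: (valid j t); rewrite ?addr0.
Qed.

Lemma pi_bE : pi_b q = fun v => vadd (vadd
   (wshift id (fun s j t => cb0 q s j t) 0 0 v)
   (wshift id (fun _ j t => cb1 q (j - 1) t) (-1) 0 v))
   (wshift id (fun _ j t => cb2 q (j + 1) t) 1 0 v).
Proof.
apply/funext => v; apply: vect_ext => s j t.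
by rewrite /pi_b /vadd /wshift !addr0; case: (valid j t); rewrite ?addr0.
Qed.

Lemma commutator_pi_aE : commutator (Dop (R:=R)) (pi_a q) = fun v => vadd (vadd
   (wshift negb (fun s j t => 2 * (lof R j + 2^-1) * ca1 q (~~ s) j (t - 1)) 0 (-1) v)
   (wshift negb (fun _ j t => ca2 q (j - 1) (t - 1)) (-1) (-1) v))
   (wshift negb (fun _ j t => - ca3 q (j + 1) t) 1 0 v).
Proof.
apply/funext => v; apply: vect_ext => s j t.
rewrite /commutator /vadd /wshift {1}/Dop /pi_a.
case vjt: (valid j t); last by ring.
by rewrite ev_valid // vjt !ev_Dop !addr0 !ca1_negb /= /lof; ring.
Qed.

Lemma commutator_pi_astarE : commutator (Dop (R:=R)) (pi_astar q) = fun v => vadd (vadd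
   (wshift negb (fun s j t => 2 * (lof R j + 2^-1) * ca1 q (~~ s) j t) 0 1 v)
   (wshift negb (fun _ j t => - ca2 q j t) 1 1 v))
   (wshift negb (fun _ j t => ca3 q j t) (-1) 0 v).
Proof.
apply/funext => v; apply: vect_ext => s j t.
rewrite /commutator /vadd /wshift {1}/Dop /pi_astar.
case vjt: (valid j t); last by ring.
by rewrite ev_valid // vjt !ev_Dop !addr0 !ca1_negb /= /lof; ring.
Qed.

Lemma commutator_pi_bE : commutator (Dop (R:=R)) (pi_b q) = fun v => vadd (vadd
   (wshift negb (fun s j t => 2 * (lof R j + 2^-1) * cb0 q (~~ s) j t) 0 0 v)
   (wshift negb (fun _ j t => cb1 q (j - 1) t) (-1) 0 v))
   (wshift negb (fun _ j t => - cb2 q (j + 1) t) 1 0 v).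
Proof.
apply/funext => v; apply: vect_ext => s j t.
rewrite /commutator /vadd /wshift {1}/Dop /pi_b.
case vjt: (valid j t); last by ring.
by rewrite ev_valid // vjt !ev_Dop !addr0 !cb0_negb /= /lof; ring.
Qed.

Lemma ca1_sqr_le4 s j t : valid j t -> valid j (t + 1) -> ca1 q s j t ^+ 2 <= 4.
Proof.
move=> vjt vjt1; have [l_ge _ _] := valid_bounds R vjt.
have : (1 * ca1 q s j t) ^+ 2 <= 2 ^+ 2 by apply: sqr_scale_le (ca1_sqr_le s vjt vjt1); lra.
by rewrite mul1r; lra.
Qed.

Lemma ca1_comm_sqr_le s j t : valid j t -> valid j (t + 1) ->
  (2 * (lof R j + 2^-1) * ca1 q s j t) ^+ 2 <= 16.
Proof.
move=> vjt vjt1; have [l_ge _ _] := valid_bounds R vjt.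
have : (2 * (lof R j + 2^-1) * ca1 q s j t) ^+ 2 <= 4 ^+ 2.
  by apply: sqr_scale_le (ca1_sqr_le s vjt vjt1); lra.
lra.
Qed.

Lemma cb0_sqr_le1 s j t : valid j t -> cb0 q s j t ^+ 2 <= 1.
Proof.
move=> vjt; have [l_ge _ _] := valid_bounds R vjt.
have : (1 * cb0 q s j t) ^+ 2 <= 1 ^+ 2 by apply: sqr_scale_le (cb0_sqr_le s vjt); lra.
by rewrite mul1r expr1n.
Qed.

Lemma cb0_comm_sqr_le s j t : valid j t -> (2 * (lof R j + 2^-1) * cb0 q s j t) ^+ 2 <= 4.
Proof.
move=> vjt; have [l_ge _ _] := valid_bounds R vjt.
have : (2 * (lof R j + 2^-1) * cb0 q s j t) ^+ 2 <= 2 ^+ 2.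
  by apply: sqr_scale_le (cb0_sqr_le s vjt); lra.
lra.
Qed.

Lemma banded_pi_a : banded (pi_a q).
Proof.
rewrite pi_aE; apply: banded_add; first apply: banded_add.
- apply: (banded_wshift (K := 4)) => // s j t vjt; rewrite addr0 => vjt1.
  by apply: ca1_sqr_le4; rewrite ?subrK.
- by apply: (banded_wshift (K := 1)) => // s j t _; apply: ca2_sqr_le.
- apply: (banded_wshift (K := 1)) => // s j t vjt; rewrite addr0 => vjt1.
  by apply: ca3_sqr_le; rewrite ?addrK.
Qed.

Lemma banded_pi_astar : banded (pi_astar q).
Proof.
rewrite pi_astarE; apply: banded_add; first apply: banded_add.
- by apply: (banded_wshift (K := 4)) => // s j t vjt; rewrite addr0; apply: ca1_sqr_le4.
- by apply: (banded_wshift (K := 1)) => // s j t vjt _; apply: ca2_sqr_le.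
- by apply: (banded_wshift (K := 1)) => // s j t vjt; rewrite addr0; apply: ca3_sqr_le.
Qed.

Lemma banded_pi_b : banded (pi_b q).
Proof.
rewrite pi_bE; apply: banded_add; first apply: banded_add.
- by apply: (banded_wshift (K := 1)) => // s j t vjt _; apply: cb0_sqr_le1.
- by apply: (banded_wshift (K := 1)) => // s j t _; rewrite addr0; apply: cb1_sqr_le.
- by apply: (banded_wshift (K := 1)) => // s j t _; rewrite addr0; apply: cb2_sqr_le.
Qed.

Lemma banded_commutator_pi_a : banded (commutator (Dop (R:=R)) (pi_a q)).
Proof.
rewrite commutator_pi_aE; apply: banded_add; first apply: banded_add.
- apply: (banded_wshift (K := 16)) => //; first exact: negb_inj.
  move=> s j t vjt; rewrite addr0 => vjt1.
  by apply: ca1_comm_sqr_le; rewrite ?subrK.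
- apply: (banded_wshift (K := 1)) => //; first exact: negb_inj.
  by move=> s j t _; apply: ca2_sqr_le.
- apply: (banded_wshift (K := 1)) => //; first exact: negb_inj.
  by move=> s j t vjt; rewrite addr0 sqrrN => vjt1; apply: ca3_sqr_le; rewrite ?addrK.
Qed.

Lemma banded_commutator_pi_astar : banded (commutator (Dop (R:=R)) (pi_astar q)).
Proof.
rewrite commutator_pi_astarE; apply: banded_add; first apply: banded_add.
- apply: (banded_wshift (K := 16)) => //; first exact: negb_inj.
  by move=> s j t vjt; rewrite addr0; apply: ca1_comm_sqr_le.
- apply: (banded_wshift (K := 1)) => //; first exact: negb_inj.
  by move=> s j t vjt _; rewrite sqrrN; apply: ca2_sqr_le.
- apply: (banded_wshift (K := 1)) => //; first exact: negb_inj.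
  by move=> s j t vjt; rewrite addr0; apply: ca3_sqr_le.
Qed.

Lemma banded_commutator_pi_b : banded (commutator (Dop (R:=R)) (pi_b q)).
Proof.
rewrite commutator_pi_bE; apply: banded_add; first apply: banded_add.
- apply: (banded_wshift (K := 4)) => //; first exact: negb_inj.
  by move=> s j t vjt _; apply: cb0_comm_sqr_le.
- apply: (banded_wshift (K := 1)) => //; first exact: negb_inj.
  by move=> s j t _; rewrite addr0; apply: cb1_sqr_le.
- apply: (banded_wshift (K := 1)) => //; first exact: negb_inj.
  by move=> s j t _; rewrite addr0 sqrrN; apply: cb2_sqr_le.
Qed.

Lemma banded_piS (x : poly_term R) : banded (piS q x).
Proof.
elim: x => [|||c|x1 IH1 x2 IH2|x1 IH1 x2 IH2].
- exact: banded_pi_a.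
- exact: banded_pi_astar.
- exact: banded_pi_b.
- have id_banded : banded (wshift id (fun _ _ _ => 1 : R) 0 0).
    by apply: (banded_wshift (K := 1)) => // *; rewrite expr1n.
  refine (banded_eq (banded_scale c id_banded) _) => v.
  by apply: vect_ext => s j t; rewrite /wshift /ev /= !addr0; case: (valid j t); rewrite ?mul1r ?mulr0.
- exact: banded_add IH1 IH2.
- exact: banded_comp IH1 IH2.
Qed.

Lemma banded_commutator_piS (x : poly_term R) : banded (commutator (Dop (R:=R)) (piS q x)).
Proof.
elim: x => [|||c|x1 IH1 x2 IH2|x1 IH1 x2 IH2].
- exact: banded_commutator_pi_a.
- exact: banded_commutator_pi_astar.
- exact: banded_commutator_pi_b.
- have zero_banded : banded (wshift id (fun _ _ _ => 0 : R) 0 0).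
    by apply: (banded_wshift (K := 0)) => // *; rewrite expr0n.
  refine (banded_eq zero_banded _) => v.
  by apply: vect_ext => s j t; rewrite /commutator /wshift /Dop /ev /=; case: (valid j t); ring.
- refine (banded_eq (banded_add IH1 IH2) _) => v.
  exact: esym (commutator_add _ _ _ Dop_vadd).
- refine (banded_eq (banded_add (banded_comp IH1 (banded_piS x2)) (banded_comp (banded_piS x1) IH2)) _) => v.
  exact: esym (commutator_comp _ _ _ (piS_vsub x1)).
Qed.

End PodlesSphere.

Unset Implicit Arguments.

Theorem proposition5 (R : realType) (q : R) (hq0 : 0 < q) (hq1 : q <= 1)
  (x : poly_term R) :
  bounded_op (commutator (Dop (R:=R)) (piS q x)).
Proof. exact: banded_bounded_op (banded_commutator_piS hq0 hq1 x). Qed.
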